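(* For every $n\ge1$, $$\det\widehat M=(-1)^{\frac{n(n-1)}2}\,2^{n^2+n+1}\,(2n+15)\,\frac{(n+6)!}{6!},$$ in particular $\det\widehat M\neq0$.
   Context: Let $\mathcal E=\{\emptyset\}\cup\{1,\dots,n\}\cup\{\{p,q\}:1\le p<q\le n\}$ (pair indices written with $p<q$). $\widehat M$ is the $\mathcal E\times\mathcal E$ rational matrix with entries $\widehat M_{\rho,\sigma}$, $\rho$ row, $\sigma$ column: Row $\emptyset$: $\widehat M_{\emptyset,\emptyset}=5(n+6)$, $\widehat M_{\emptyset,p}=5n+34$, $\widehat M_{\emptyset,\{p,q\}}=5(n+6)$. Row $k$: $\widehat M_{k,\emptyset}=7$; $\widehat M_{k,p}=35$ if $p=k$, $7$ if $p\neq k$; $\widehat M_{k,\{p,q\}}=3$ if $k=p$, $35$ if $k=q$, $7$ if $k\notin\{p,q\}$. Row $\{k,l\}$: $\widehat M_{\{k,l\},\emptyset}=5$; $\widehat M_{\{k,l\},p}=15$ if $p\in\{k,l\}$, $5$ otherwise; $\widehat M_{\{k,l\},\{p,q\}}=9$ if $\{k,l\}=\{p,q\}$, $3$ if $\{k,l\}\cap\{p,q\}=\{p\}$, $15$ if $\{k,l\}\cap\{p,q\}=\{q\}$, $5$ if disjoint. *)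

From HB Require Import structures.
From mathcomp Require Import all_boot all_order all_algebra.
Set Implicit Arguments. Unset Strict Implicit. Unset Printing Implicit Defensive.
Import Order.TTheory GRing.Theory Num.Theory.
Local Open Scope ring_scope.

(* Index set E = {emptyset} ∪ {1..n} ∪ {{p,q} : 1 <= p < q <= n}.
   Singletons p ∈ {1..n} are encoded by i : 'I_n with p = i+1 (order preserved);
   pairs {p,q} with p<q by (i,j) : 'I_n * 'I_n with i < j. *)
Definition pairE (n : nat) := {pq : 'I_n * 'I_n | (pq.1 < pq.2)%N}.
Definition idxE (n : nat) : finType := option ('I_n + pairE n)%type.

Definition Mentry (n : nat) (r c : idxE n) : rat :=
  match r, c with
  | None, None => (5 * (n + 6))%:R
  | None, Some (inl _) => (5 * n + 34)%:R
  | None, Some (inr _) => (5 * (n + 6))%:R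
  | Some (inl _), None => 7
  | Some (inl k), Some (inl p) => if k == p then 35 else 7
  | Some (inl k), Some (inr pq) =>
      let p := (val pq).1 in let q := (val pq).2 in
      if k == p then 3 else if k == q then 35 else 7
  | Some (inr _), None => 5
  | Some (inr kl), Some (inl p) =>
      let k := (val kl).1 in let l := (val kl).2 in
      if (p == k) || (p == l) then 15 else 5
  | Some (inr kl), Some (inr pq) =>
      let k := (val kl).1 in let l := (val kl).2 in
      let p := (val pq).1 in let q := (val pq).2 in
      let pin := (p == k) || (p == l) in
      let qin := (q == k) || (q == l) in
      if pin && qin then 9
      else if pin then 3
      else if qin then 15
      else 5
  end.

(* The matrix \widehat M, written in the library's 'M_(#|E|) type by
   enumerating E (the determinant does not depend on the enumeration order,
   since rows and columns use the same one). *)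
Definition Mhat (n : nat) : 'M[rat]_#|idxE n| :=
  \matrix_(i, j) Mentry (enum_val i) (enum_val j).

From HB Require Import structures.
From mathcomp Require Import all_boot all_order all_algebra fingroup perm.
From mathcomp Require Import zify ring lra.
Set Implicit Arguments. Unset Strict Implicit. Unset Printing Implicit Defensive.
Import Order.TTheory GRing.Theory Num.Theory.
Local Open Scope ring_scope.

(* Unitriangular row and column operations reduce M^ to a matrix that is
   triangular for the order {pairs} < emptyset < 1 < ... < n of E.
   Inclusion-exclusion on the columns (column {p,q} minus columns p and q plus
   column emptyset, column p minus column emptyset) kills most entries; then
   row {k,l} loses 3/8 of rows k and l, row emptyset loses twice the sum of the
   pair rows, row k loses 8 times the rows {k,l} with k < l, and finally column
   emptyset loses a quarter of the singleton columns.  The resulting diagonal is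
   -4 on the pairs, 2(2n+15) at emptyset and 4(n+7-k) at the singleton k, so
   det M^ = 2(2n+15) * 4^n (n+6)!/6! * (-4)^(n choose 2). *)

Section TriangularByWeight.
Variable R : comPzRingType.

Lemma det_trig_weight N (A : 'M[R]_N) (w : 'I_N -> nat) :
    (forall i j, i != j -> (w j <= w i)%N -> A i j = 0) ->
  \det A = \prod_i A i i.
Proof.
move=> Aw; rewrite /determinant (bigD1 1%g) //= [X in _ + X]big1 ?addr0.
  by rewrite odd_perm1 expr0 mul1r; apply: eq_bigr => i _; rewrite perm1.
move=> s s_neq1; case: (pickP (fun i => A i (s i) == 0)) => [i /eqP Ai0 | nzA].
  by rewrite (bigD1 i) //= Ai0 mul0r mulr0.
have w_leqif i : (w i <= w (s i) ?= iff (s i == i))%N.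
  case: (eqVneq (s i) i) => [-> | ne]; first by split; rewrite ?eqxx.
  have lt : (w i < w (s i))%N.
    rewrite ltnNge; apply/negP => le.
    by move: (nzA i); rewrite (Aw i (s i)) ?eqxx // eq_sym.
  by split; [exact: ltnW | rewrite ltn_eqF].
have [_] := leqif_sum (P := xpredT) (fun i _ => w_leqif i).
rewrite (reindex_inj (@perm_inj _ s)) eqxx => /esym/forallP s1.
by move/eqP: s_neq1; case; apply/permP => i; rewrite perm1; apply/eqP/s1.
Qed.

End TriangularByWeight.

Section FinTypeMatrices.
Variables (R : comPzRingType) (T : finType).

Definition mx_of (F : T -> T -> R) : 'M[R]_#|T| :=
  \matrix_(i, j) F (enum_val i) (enum_val j).

Definition mul_fun (F G : T -> T -> R) x z := \sum_y F x y * G y z.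

Lemma sum_enum_val (F : T -> R) : \sum_(i < #|T|) F (enum_val i) = \sum_x F x.
Proof. by rewrite (reindex _ (onW_bij _ (@enum_val_bij T))). Qed.

Lemma mx_of_mul F G : mx_of F *m mx_of G = mx_of (mul_fun F G).
Proof.
apply/matrixP => i j; rewrite !mxE /mul_fun -sum_enum_val.
by apply: eq_bigr => k _; rewrite !mxE.
Qed.

Lemma eq_mx_of F G : F =2 G -> mx_of F = mx_of G.
Proof. by move=> eqFG; apply/matrixP => i j; rewrite !mxE eqFG. Qed.

Lemma det_mx_of_trig F (w : T -> nat) :
    (forall x y, x != y -> (w y <= w x)%N -> F x y = 0) ->
  \det (mx_of F) = \prod_x F x x.
Proof.
move=> Fw; rewrite (@det_trig_weight _ _ _ (w \o enum_val)).
  rewrite (reindex _ (onW_bij _ (@enum_val_bij T))).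
  by apply: eq_bigr => i _; rewrite mxE.
move=> i j ne; rewrite mxE; apply: Fw.
by apply: contra ne => /eqP /enum_val_inj ->.
Qed.

Lemma det_mx_of_unitrig F (w : T -> nat) :
    (forall x y, x != y -> (w y <= w x)%N -> F x y = 0) -> (forall x, F x x = 1) ->
  \det (mx_of F) = 1.
Proof. by move=> Fw F1; rewrite (det_mx_of_trig Fw) big1. Qed.

Lemma sum_mul_delta (F : T -> R) a : \sum_y F y * (y == a)%:R = F a.
Proof.
by rewrite (bigD1 a) //= eqxx mulr1 big1 ?addr0 // => y /negbTE ->; rewrite mulr0.
Qed.

Lemma sum_delta_mul (F : T -> R) a : \sum_y (y == a)%:R * F y = F a.
Proof. by rewrite -[RHS](sum_mul_delta F a); apply: eq_bigr => y _; rewrite mulrC. Qed.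

(* Rewriting [sum_mul_delta] term by term at concrete indices of [idxE n]
   makes unification unfold the equality test; the combined forms avoid it. *)
Lemma sum_mul_delta2 (F : T -> R) a b :
  \sum_y F y * ((y == a)%:R - (y == b)%:R) = F a - F b.
Proof. by under eq_bigr => y _ do rewrite mulrBr; rewrite sumrB !sum_mul_delta. Qed.

Lemma sum_mul_delta4 (F : T -> R) a b c d :
  \sum_y F y * ((y == a)%:R - (y == b)%:R - (y == c)%:R + (y == d)%:R) =
    F a - F b - F c + F d.
Proof.
under eq_bigr => y _ do rewrite mulrDr 2!mulrBr.
by rewrite big_split /= !sumrB !sum_mul_delta.
Qed.

Lemma sum_delta_add_mul (E G : T -> R) x :
  \sum_y ((y == x)%:R + E y) * G y = G x + \sum_y E y * G y.
Proof.
by under eq_bigr => y _ do rewrite mulrDl; rewrite big_split /= sum_delta_mul.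
Qed.

Lemma sum_mul_delta_sub (E G : T -> R) z :
  \sum_y G y * ((y == z)%:R - E y) = G z - \sum_y G y * E y.
Proof. by under eq_bigr => y _ do rewrite mulrBr; rewrite sumrB sum_mul_delta. Qed.

Lemma sum_delta_sub2_mul (G : T -> R) c x a b :
  \sum_y ((y == x)%:R - c * ((y == a)%:R + (y == b)%:R)) * G y =
    G x - c * (G a + G b).
Proof.
under eq_bigr => y _ do rewrite mulrBl -mulrA mulrDl.
by rewrite sumrB -mulr_sumr big_split /= !sum_delta_mul.
Qed.

End FinTypeMatrices.

Lemma sumn_delta (T : finType) (P : pred T) (a : T) :
  (\sum_(i | P i) (i == a) = P a)%N.
Proof.
rewrite big_mkcond /= (bigD1 a) //= eqxx big1 ?addn0; first by case: (P a).
by move=> i /negbTE ->; case: (P i).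
Qed.

Lemma sum_ord_gt n m : (\sum_(j < n) (m < j) = n - m.+1)%N.
Proof.
rewrite -(big_mkord xpredT (fun j => (m < j) : nat)).
elim: n => [|n IH]; first by rewrite big_nil.
by rewrite big_nat_recr //= IH; case: ltnP => /= h; lia.
Qed.

Lemma sum_ord_lt n m : (\sum_(j < n) (j < m) = minn m n)%N.
Proof.
rewrite -(big_mkord xpredT (fun j => (j < m) : nat)).
elim: n => [|n IH]; first by rewrite big_nil minn0.
by rewrite big_nat_recr //= IH; case: (ltnP n m) => h /=; lia.
Qed.

Lemma natr_fact_neq0 (R : numDomainType) m : (m`!)%:R != 0 :> R.
Proof. by rewrite pnatr_eq0 -lt0n fact_gt0. Qed.

Lemma bin2_mul2 n : ('C(n, 2) * 2 = n * n.-1)%N.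
Proof. by have := bin_ffact n 2; rewrite ffactnS ffactn1 => <-. Qed.

Section Pairs.
Variable n : nat.
Implicit Types (i j k p : 'I_n) (r s : pairE n).

Definition pair_lo s : 'I_n := (val s).1.
Definition pair_hi s : 'I_n := (val s).2.
Definition in_pair p s : bool := (pair_lo s == p) || (pair_hi s == p).

Lemma pair_eqE r s : (r == s) = (pair_lo r == pair_lo s) && (pair_hi r == pair_hi s).
Proof. by case: r => [[a b] ?]; case: s => [[c d] ?]. Qed.

Lemma sum_pairs (F : 'I_n -> 'I_n -> nat) :
  (\sum_s F (pair_lo s) (pair_hi s) =
     \sum_(i : 'I_n) \sum_(j : 'I_n | (i < j)%N) F i j)%N.
Proof.
rewrite pair_big_dep /= (reindex_omap (val : pairE n -> _) insub); last first.
  by move=> ij /= lt_ij; rewrite insubT.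
symmetry; apply: eq_big => -[[i j] lt_ij] //=.
by rewrite lt_ij insubT /=; apply/eqP; congr Some; apply: val_inj.
Qed.

Lemma sum1_ord_gt i : (\sum_(j : 'I_n | (i < j)%N) 1 = n - i.+1)%N.
Proof. by rewrite -sum_ord_gt big_mkcond; apply: eq_bigr => j _; case: ltnP. Qed.

Lemma card_pairE : #|{: pairE n}| = 'C(n, 2).
Proof.
rewrite -sum1_card (sum_pairs (fun _ _ => 1%N)).
rewrite (eq_bigr _ (fun i _ => sum1_ord_gt i)) (reindex_inj rev_ord_inj) /=.
rewrite -bin2_sum big_mkord; apply: eq_bigr => i _; have := ltn_ord i; lia.
Qed.

Lemma count_lo k : (\sum_s (pair_lo s == k) = n - k.+1)%N.
Proof.
rewrite (sum_pairs (fun i _ => (i == k) : nat)).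
rewrite (eq_bigr (fun i => (i == k) * (n - i.+1))%N); last first.
  by move=> i _; rewrite -sum1_ord_gt big_distrr /= muln1.
by rewrite (bigD1 k) //= eqxx mul1n big1 ?addn0 // => i /negbTE ->.
Qed.

Lemma count_hi k : (\sum_s (pair_hi s == k) = k)%N.
Proof.
rewrite (sum_pairs (fun _ j => (j == k) : nat)).
rewrite (eq_bigr _ (fun i _ => sumn_delta (fun j : 'I_n => i < j)%N k)).
by rewrite sum_ord_lt; apply/minn_idPl/ltnW.
Qed.

Lemma in_pairE p s : in_pair p s = ((pair_lo s == p) + (pair_hi s == p))%N :> nat.
Proof.
case: s => [[i j] /= lt_ij]; rewrite /in_pair /pair_lo /pair_hi /=.
case: (eqVneq i p) => [eq_ip|]; case: (eqVneq j p) => //.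
by move=> eq_jp; rewrite eq_ip eq_jp ltnn in lt_ij.
Qed.

Lemma sum_in_pair s : (\sum_p in_pair p s = 2)%N.
Proof.
under eq_bigr => p _ do rewrite in_pairE ![_ == p]eq_sym.
by rewrite big_split /= !sumn_delta.
Qed.

Lemma count_in_pair p : (\sum_s in_pair p s = n.-1)%N.
Proof.
under eq_bigr => s _ do rewrite in_pairE.
by rewrite big_split /= count_lo count_hi; have := ltn_ord p; lia.
Qed.

Lemma count_lo_in_pair k p :
  (\sum_s (pair_lo s == k) * in_pair p s = (k == p) * (n - k.+1) + (k < p))%N.
Proof.
rewrite /in_pair (sum_pairs (fun i j => (i == k) * ((i == p) || (j == p))))%N.
rewrite (bigD1 k) //= [X in (_ + X)%N]big1 => [|i /negbTE ->]; last by rewrite big1.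
rewrite addn0; under eq_bigr => j _ do rewrite eqxx mul1n.
case: (eqVneq p k) => [->|_].
  by rewrite ltnn addn0 mul1n -(sum1_ord_gt k).
by rewrite add0n -(sumn_delta (fun j : 'I_n => k < j)%N).
Qed.

End Pairs.

Lemma big_option (R : Type) (idx : R) (op : Monoid.com_law idx) (T : finType)
    (F : option T -> R) :
  \big[op/idx]_x F x = op (F None) (\big[op/idx]_x F (Some x)).
Proof.
rewrite (bigD1 None) //=; congr (op _ _).
rewrite (reindex_omap Some id) => [|[x|] //].
by apply: eq_bigl => x; rewrite eqxx.
Qed.

Section Reduction.
Variable n : nat.
Local Notation E := (idxE n).
Local Notation single k := (Some (inl k)).
Local Notation doubleton s := (Some (inr s)).
Implicit Types (x y z : E) (k p : 'I_n) (r s : pairE n).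

Lemma big_idxE (R : Type) (idx : R) (op : Monoid.com_law idx) (F : E -> R) :
  \big[op/idx]_y F y =
    op (F None) (op (\big[op/idx]_k F (single k)) (\big[op/idx]_s F (doubleton s))).
Proof. by rewrite big_option big_sumType. Qed.

Definition colop1 y z : rat :=
  match z with
  | None => (y == None)%:R
  | single p => (y == z)%:R - (y == None)%:R
  | doubleton s => (y == z)%:R - (y == single (pair_lo s))%:R
                     - (y == single (pair_hi s))%:R + (y == None)%:R
  end.

Definition M1 x z : rat :=
  match x, z with
  | None, None => (5 * (n + 6))%:R
  | None, single _ => 4
  | None, doubleton _ => -8
  | single _, None => 7
  | single k, single p => 28 * (k == p)%:R
  | single k, doubleton s => -32 * (pair_lo s == k)%:R
  | doubleton _, None => 5
  | doubleton r, single p => 10 * (in_pair p r)%:R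
  | doubleton r, doubleton s => -4 * (r == s)%:R - 12 * (in_pair (pair_lo s) r)%:R
  end.

Definition rowop1 x y : rat :=
  (y == x)%:R - if x is doubleton r then
    3 / 8 * ((y == single (pair_lo r))%:R + (y == single (pair_hi r))%:R) else 0.

Definition M2 x z : rat :=
  match x, z with
  | doubleton _, None => - (1 / 4)
  | doubleton r, single p => - (1 / 2) * (in_pair p r)%:R
  | doubleton r, doubleton s => -4 * (r == s)%:R
  | _, _ => M1 x z
  end.

Definition rowop2 x y : rat :=
  (y == x)%:R + match x, y with
                | None, doubleton _ => -2
                | single k, doubleton s => -8 * (pair_lo s == k)%:R
                | _, _ => 0
                end.

Definition M3 x z : rat :=
  match x, z with
  | None, None => 5 * n%:R + 30 + 'C(n, 2)%:R / 2
  | None, single _ => 4 + n.-1%:R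
  | None, doubleton _ => 0
  | single k, None => 7 + 2 * (n - k.+1)%:R
  | single k, single p =>
      28 * (k == p)%:R + 4 * ((k == p)%:R * (n - k.+1)%:R + (k < p)%:R)
  | single _, doubleton _ => 0
  | doubleton _, _ => M2 x z
  end.

Definition colop2 y z : rat :=
  (y == z)%:R - match z, y with None, single _ => 1 / 4 | _, _ => 0 end.

Definition M4 x z : rat :=
  match z, x with
  | None, None => 2 * (2 * n%:R + 15)
  | None, _ => 0
  | _, _ => M3 x z
  end.

Ltac solve_cases :=
  repeat (case: eqP => //= ?; subst);
  try congruence; try (exfalso; simpl in *; lia); lra.

Lemma mul_Mhat_colop1 : mul_fun (@Mentry n) colop1 =2 M1.
Proof.
move=> x [[p|s]|]; rewrite /mul_fun /=; last by rewrite sum_mul_delta.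
  rewrite sum_mul_delta2.
  by case: x => [[k|[[a b] lt_ab]]|] /=; rewrite /in_pair /pair_lo /pair_hi /=;
    solve_cases.
rewrite sum_mul_delta4; case: s => [[c d] lt_cd].
by case: x => [[k|[[a b] lt_ab]]|] /=; rewrite ?pair_eqE /in_pair /pair_lo /pair_hi /=;
  solve_cases.
Qed.

Lemma mul_rowop1_M1 : mul_fun rowop1 M1 =2 M2.
Proof.
move=> [[k|r]|] z; rewrite /mul_fun /rowop1.
- by under eq_bigr => y _ do rewrite subr0; rewrite sum_delta_mul.
- rewrite sum_delta_sub2_mul; case: r => [[a b] lt_ab].
  by case: z => [[p|[[c d] lt_cd]]|] /=; rewrite ?pair_eqE /in_pair /pair_lo /pair_hi /=;
    solve_cases.
- by under eq_bigr => y _ do rewrite subr0; rewrite sum_delta_mul.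
Qed.

Lemma sum_mul_doubletons (F G : E -> rat) :
    F None = 0 -> (forall k, F (single k) = 0) ->
  \sum_y F y * G y = \sum_s F (doubleton s) * G (doubleton s).
Proof.
move=> F0 F1; rewrite big_idxE /= F0 mul0r add0r big1 ?add0r // => k _.
by rewrite F1 mul0r.
Qed.

Lemma mul_rowop2_M2 : mul_fun rowop2 M2 =2 M3.
Proof.
move=> x z; rewrite /mul_fun /rowop2 sum_delta_add_mul.
rewrite sum_mul_doubletons; [|by case: x => [[]|]..].
case: x => [[k|r]|] /=; last first.
- case: z => [[p|t]|] /=.
  + rewrite (eq_bigr (fun s => (in_pair p s)%:R)) => [|s _]; last by lra.
    by rewrite -natr_sum count_in_pair.
  + rewrite (eq_bigr (fun s => 8 * (s == t)%:R)) => [|s _]; last by lra.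
    by rewrite sum_mul_delta; lra.
  + by rewrite sumr_const -mulr_natr card_pairE !natrM natrD; lra.
- by rewrite big1 ?addr0 // => s _; rewrite mul0r.
case: z => [[p|t]|] /=.
- rewrite (eq_bigr (fun s => 4 * ((pair_lo s == k) * in_pair p s)%:R)) => [|s _];
    last by rewrite natrM; lra.
  by rewrite -mulr_sumr -natr_sum count_lo_in_pair natrD natrM; lra.
- rewrite (eq_bigr (fun s => 32 * (pair_lo s == k)%:R * (s == t)%:R)) => [|s _];
    last by lra.
  by rewrite sum_mul_delta; lra.
- rewrite (eq_bigr (fun s => 2 * (pair_lo s == k)%:R)) => [|s _]; last by lra.
  by rewrite -mulr_sumr -natr_sum count_lo.
Qed.

Lemma mul_M3_colop2 : mul_fun M3 colop2 =2 M4.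
Proof.
move=> x [z|]; rewrite /mul_fun /colop2 sum_mul_delta_sub /=.
  by rewrite big1 ?subr0 // => y _; rewrite mulr0.
have -> : \sum_y M3 x y * (if y is single _ then 1 / 4 else 0) =
          1 / 4 * \sum_k M3 x (single k).
  rewrite big_idxE /= mulr0 add0r [X in _ + X]big1 ?addr0 => [|s _]; last exact: mulr0.
  by rewrite mulr_sumr; apply: eq_bigr => k _; rewrite mulrC.
case: x => [[k|r]|] /=.
- rewrite (eq_bigr (fun p => (28 + 4 * (n - k.+1)%:R) * (p == k)%:R + 4 * (k < p)%:R));
    last by move=> p _; rewrite [p == k]eq_sym; lra.
  by rewrite big_split /= -!mulr_sumr -!natr_sum sumn_delta sum_ord_gt mulr1; lra.
- rewrite (eq_bigr (fun p => - (1 / 2) * (in_pair p r)%:R)) //.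
  by rewrite -mulr_sumr -natr_sum sum_in_pair; lra.
- rewrite sumr_const card_ord -mulr_natr.
  by have /(congr1 (fun m => m%:R : rat)) := bin2_mul2 n; rewrite !natrM; nra.
Qed.

Lemma det_colop1 : \det (mx_of colop1) = 1.
Proof.
pose w y := (if y is Some y then (if y is inl _ then 1 else 2) else 0)%N.
apply: (@det_mx_of_unitrig _ _ _ w).
  move=> y z ne; rewrite /colop1 (negbTE ne).
  by case: z ne => [[p|s]|]; case: y => [[k|r]|].
by move=> [[k|r]|]; rewrite /colop1 eqxx //=; lra.
Qed.

Lemma det_rowop1 : \det (mx_of rowop1) = 1.
Proof.
apply: (@det_mx_of_unitrig _ _ _ (fun y => if y is single _ then 1 else 0)%N).
  move=> x y ne; rewrite /rowop1 eq_sym (negbTE ne).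
  by case: y ne => [[p|s]|]; case: x => [[k|r]|] //= _ _; lra.
by move=> [[k|r]|]; rewrite /rowop1 eqxx //=; lra.
Qed.

Lemma det_rowop2 : \det (mx_of rowop2) = 1.
Proof.
apply: (@det_mx_of_unitrig _ _ _ (fun y => if y is doubleton _ then 1 else 0)%N).
  move=> x y ne; rewrite /rowop2 eq_sym (negbTE ne).
  by case: y ne => [[p|s]|]; case: x => [[k|r]|] //= _ _; lra.
by move=> [[k|r]|]; rewrite /rowop2 eqxx //=; lra.
Qed.

Lemma det_colop2 : \det (mx_of colop2) = 1.
Proof.
apply: (@det_mx_of_unitrig _ _ _ (fun y => if y is None then 1 else 0)%N).
  move=> y z ne; rewrite /colop2 (negbTE ne).
  by case: z ne => [[p|s]|]; case: y => [[k|r]|] //= _ _; lra.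
by move=> [[k|r]|]; rewrite /colop2 eqxx //=; lra.
Qed.

Lemma det_M4 : \det (mx_of M4) =
  2 * (2 * n%:R + 15) * \prod_(k < n) (4 * (n + 6 - k)%:R) * (-4) ^+ 'C(n, 2).
Proof.
pose w y := if y is single k then k.+2 else if y is None then 1%N else 0%N.
rewrite (@det_mx_of_trig _ _ _ w); last first.
  move=> x [[p|t]|] ne le; case: x ne le => [[k|r]|] //= ne le.
  - have ne_kp : k != p by apply: contra ne => /eqP ->.
    have nlt_kp : (k < p)%N = false by apply/negbTE; rewrite -leqNgt; lia.
    by rewrite (negbTE ne_kp) nlt_kp !(mulr0, mul0r, addr0).
  - have ne_rt : r != t by apply: contra ne => /eqP ->.
    by rewrite (negbTE ne_rt) mulr0.
rewrite big_idxE /= [X in _ * (_ * X)](eq_bigr (fun _ => -4)) => [|s _];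
  last by rewrite eqxx mulr1.
rewrite prodr_const card_pairE mulrA; congr (_ * _ * _).
apply: eq_bigr => k _; rewrite eqxx ltnn /=.
have -> : (n + 6 - k = 7 + (n - k.+1))%N by have := ltn_ord k; lia.
by rewrite natrD; lra.
Qed.

Lemma det_Mhat_M4 : \det (Mhat n) = \det (mx_of M4).
Proof.
rewrite -(eq_mx_of mul_M3_colop2) -mx_of_mul det_mulmx det_colop2 mulr1.
rewrite -(eq_mx_of mul_rowop2_M2) -mx_of_mul det_mulmx det_rowop2 mul1r.
rewrite -(eq_mx_of mul_rowop1_M1) -mx_of_mul det_mulmx det_rowop1 mul1r.
by rewrite -(eq_mx_of mul_Mhat_colop1) -mx_of_mul det_mulmx det_colop1 mulr1.
Qed.

End Reduction.

Lemma det_Mhat n :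
  \det (Mhat n) = (-1) ^+ 'C(n, 2) * 2 ^+ (n ^ 2 + n + 1) * (2 * n + 15)%:R
                    * ((n + 6)`!)%:R / (6`!)%:R.
Proof.
have pow2 : (2 : rat) ^+ (n ^ 2 + n + 1) =
            2 * (2 ^+ n * 2 ^+ n) * (2 ^+ 'C(n, 2) * 2 ^+ 'C(n, 2)).
  have -> : (n ^ 2 + n + 1 = (n + n + ('C(n, 2) + 'C(n, 2))).+1)%N.
    by have := bin2_mul2 n; case: n => [|m] /=; nia.
  by rewrite exprS !exprD mulrA.
have pow4 k : (4 : rat) ^+ k = 2 ^+ k * 2 ^+ k by rewrite -exprMn.
have pown4 k : (-4 : rat) ^+ k = (-1) ^+ k * (2 ^+ k * 2 ^+ k).
  by rewrite -pow4 -exprMn mulN1r.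
have prod_diag : \prod_(k < n) (4 * (n + 6 - k)%:R) = 4 ^+ n * ((n + 6) ^_ n)%:R :> rat.
  by rewrite big_split /= prodr_const card_ord -natr_prod -ffact_prod.
rewrite det_Mhat_M4 det_M4 prod_diag -(ffact_fact (leq_addr 6 n)) addKn natrM.
rewrite pow2 pow4 pown4 natrD natrM.
by field; exact: natr_fact_neq0.
Qed.

Theorem mainTheorem12 (n : nat) (hn : (1 <= n)%N) :
  \det (Mhat n) =
    (-1) ^+ (n * (n - 1) %/ 2) * 2 ^+ (n ^ 2 + n + 1) * (2 * n + 15)%:R
      * ((n + 6)`!)%:R / (6`!)%:R
  /\ \det (Mhat n) != 0.
Proof.
(* The formula also holds for n = 0. *)
have -> : (n * (n - 1) %/ 2)%N = 'C(n, 2) by rewrite bin2 subn1 divn2.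
split; first exact: det_Mhat.
rewrite det_Mhat; apply: mulf_neq0; last by rewrite invr_eq0 natr_fact_neq0.
apply: mulf_neq0; last exact: natr_fact_neq0.
apply: mulf_neq0; last by rewrite pnatr_eq0 addn_eq0 andbF.
apply: mulf_neq0; apply: expf_neq0; first by rewrite oppr_eq0 oner_eq0.
by rewrite pnatr_eq0.
Qed.
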